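(* Let $\mathcal{A}$ be a finite set, $B\ge0$ an integer, $\mathfrak{F}:\mathcal{A}^{\mathbb{Z}}\to\mathcal{A}^{\mathbb{Z}}$ a cellular automaton with neighbourhood $\{-B,\dots,B\}$, and $\phi:\mathcal{A}\to\mathbb{N}$ conserved by $\mathfrak{F}$. Let $\mathbf{a}\in\mathcal{A}^{<\mathbb{Z}}$ and $\mathbf{a}'=\mathfrak{F}(\mathbf{a})$. Then: (1) for every $\mathsf{z}\in\mathbb{Z}$, $\overset{\leftrightarrow}{I}_{\mathsf{z}}(\mathbf{a})=-\big(\phi(a'_{\mathsf{z}})-\phi(a_{\mathsf{z}})\big)$; (2) for every $\mathsf{z}$, $\vec{I}_{\mathsf{z}}(\mathbf{a})$ depends only on $\mathbf{a}|_{\{\mathsf{z}-B,\dots,\mathsf{z}+B\}}$, i.e. if $\mathbf{b}\in\mathcal{A}^{<\mathbb{Z}}$ satisfies $b_{\mathsf{y}}=a_{\mathsf{y}}$ for all $\mathsf{y}\in\{\mathsf{z}-B,\dots,\mathsf{z}+B\}$ then $\vec{I}_{\mathsf{z}}(\mathbf{b})=\vec{I}_{\mathsf{z}}(\mathbf{a})$; (3) for every $\mathsf{z}$: (i) $\vec{I}_{\mathsf{z}}(\mathbf{a})\le\sum_{\mathsf{y}=\mathsf{z}-B}^{\mathsf{z}}\phi(a_{\mathsf{y}})$; (ii) $\vec{I}_{\mathsf{z}}(\mathbf{a})\le\sum_{\mathsf{y}=\mathsf{z}}^{\mathsf{z}+B}\phi(a'_{\mathsf{y}})$; (iii) $\overset{\leftharpoonup}{I}_{\mathsf{z}}(\mathbf{a})\le\sum_{\mathsf{y}=\mathsf{z}}^{\mathsf{z}+B}\phi(a_{\mathsf{y}})$;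 (iv) $\overset{\leftharpoonup}{I}_{\mathsf{z}}(\mathbf{a})\le\sum_{\mathsf{y}=\mathsf{z}-B}^{\mathsf{z}}\phi(a'_{\mathsf{y}})$.
   Context: The CA is $\mathfrak{F}(\mathbf{a})_{\mathsf{z}}=\mathfrak{f}(a_{\mathsf{z}-B},\dots,a_{\mathsf{z}+B})$. Vacuum states are $\phi^{-1}\{0\}$; $\mathcal{A}^{<\mathbb{Z}}$ is the set of configurations with only finitely many non-vacuum sites; $\phi$ is conserved by $\mathfrak{F}$ if for every $\mathbf{a}\in\mathcal{A}^{<\mathbb{Z}}$, $\mathfrak{F}(\mathbf{a})\in\mathcal{A}^{<\mathbb{Z}}$ and $\sum_{\mathsf{z}}\phi(\mathfrak{F}(\mathbf{a})_{\mathsf{z}})=\sum_{\mathsf{z}}\phi(a_{\mathsf{z}})$. Flux: for $\mathbf{a}\in\mathcal{A}^{<\mathbb{Z}}$, $\mathbf{a}'=\mathfrak{F}(\mathbf{a})$, $\vec{I}_{\mathsf{z}}(\mathbf{a})=\sum_{\mathsf{y}\le\mathsf{z}}\phi(a_{\mathsf{y}})-\sum_{\mathsf{y}\le\mathsf{z}}\phi(a'_{\mathsf{y}})$ (which by conservation also equals $\sum_{\mathsf{y}>\mathsf{z}}\phi(a'_{\mathsf{y}})-\sum_{\mathsf{y}>\mathsf{z}}\phi(a_{\mathsf{y}})$); $\overset{\leftharpoonup}{I}_{\mathsf{z}}(\mathbf{a})=-\vec{I}_{\mathsf{z}-1}(\mathbf{a})$; $\overset{\leftrightarrow}{I}_{\mathsf{z}}(\mathbf{a})=\overset{\leftharpoonup}{I}_{\mathsf{z}}(\mathbf{a})+\vec{I}_{\mathsf{z}}(\mathbf{a})$.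 *)

From mathcomp Require Import all_boot all_order all_algebra.
From Stdlib Require Import ClassicalEpsilon.
Set Implicit Arguments. Unset Strict Implicit. Unset Printing Implicit Defensive.
Import Order.TTheory GRing.Theory Num.Theory.
Local Open Scope ring_scope.

Definition CA (A : finType) (B : nat) (f : {ffun 'I_(B + B).+1 -> A} -> A)
  (a : int -> A) : int -> A :=
  fun z => f [ffun i : 'I_(B + B).+1 => a (z - B%:Z + (i : nat)%:Z)].

(* a is in A^{<Z}: only finitely many non-vacuum sites (vacuum = phi^-1{0}). *)
Definition fin_supp (A : Type) (phi : A -> nat) (a : int -> A) : Prop :=
  exists N : nat, forall y : int, (N%:Z < `|y|)%R -> phi (a y) = 0%N.

(* Sum of an eventually-zero nat sequence: sum up to a (chosen) index after
   which all terms vanish.  Only meaningful for eventually-zero u. *)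
Definition ez_sum (u : nat -> nat) : nat :=
  let N := epsilon (inhabits 0%N) (fun N => forall k, (N <= k)%N -> u k = 0%N) in
  (\sum_(k < N) u k)%N.

Definition lsum (A : Type) (phi : A -> nat) (a : int -> A) (z : int) : nat :=
  ez_sum (fun k => phi (a (z - k%:Z))).

Definition rsum (A : Type) (phi : A -> nat) (a : int -> A) (z : int) : nat :=
  ez_sum (fun k => phi (a (z + 1 + k%:Z))).

Definition total (A : Type) (phi : A -> nat) (a : int -> A) : nat :=
  (lsum phi a 0 + rsum phi a 0)%N.

Definition conserved (A : Type) (F : (int -> A) -> (int -> A)) (phi : A -> nat) : Prop :=
  forall a, fin_supp phi a -> fin_supp phi (F a) /\ total phi (F a) = total phi a.

Definition flux_r (A : Type) (F : (int -> A) -> (int -> A)) (phi : A -> nat)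
  (a : int -> A) (z : int) : int :=
  (lsum phi a z)%:Z - (lsum phi (F a) z)%:Z.

Definition flux_l (A : Type) (F : (int -> A) -> (int -> A)) (phi : A -> nat)
  (a : int -> A) (z : int) : int :=
  - flux_r F phi a (z - 1).

Definition flux_lr (A : Type) (F : (int -> A) -> (int -> A)) (phi : A -> nat)
  (a : int -> A) (z : int) : int :=
  flux_l F phi a z + flux_r F phi a z.

From Pilot Require Import Defs.
From mathcomp Require Import all_boot all_order all_algebra zify.
From Stdlib Require Import ClassicalEpsilon FunctionalExtensionality.
Set Implicit Arguments. Unset Strict Implicit. Unset Printing Implicit Defensive.
Import Order.TTheory GRing.Theory Num.Theory.
Local Open Scope ring_scope.

(* By conservation, the right flux across the edge between z and z + 1 is
   both sum_{y <= z} (phi a_y - phi a'_y) and sum_{y > z} (phi a'_y - phi a_y).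
   As a'_y depends on a only within distance B of y, the first expression sees
   a only on (-oo, z + B] and the second only on [z + 1 - B, +oo); gluing two
   configurations shows that the flux sees a only on (z - B, z + B].  Replacing
   a by vacuum outside that window kills one of the two sums of a, which bounds
   the flux by a window sum of a.  The flux changes by phi a_z - phi a'_z from
   z - 1 to z, and telescoping this over B sites turns the bounds in terms of
   a into the bounds in terms of a'. *)

Lemma big_ord_vanishing (u : nat -> nat) (N M : nat) :
  (forall k, (N <= k)%N -> u k = 0%N) -> (N <= M)%N ->
  (\sum_(k < M) u k)%N = (\sum_(k < N) u k)%N.
Proof.
move=> u0 leNM; rewrite (big_ord_widen _ _ leNM) [RHS]big_mkcond /=.
by apply: eq_bigr => k _; case: ltnP => // /u0.
Qed.

Lemma ez_sumE (u : nat -> nat) (N : nat) :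
  (forall k, (N <= k)%N -> u k = 0%N) -> ez_sum u = (\sum_(k < N) u k)%N.
Proof.
move=> u0; rewrite /ez_sum.
have := epsilon_spec (inhabits 0%N) (fun M => forall k, (M <= k)%N -> u k = 0%N)
  (ex_intro _ N u0).
set M := epsilon _ _ => uM0.
by rewrite -(big_ord_vanishing uM0 (leq_maxl M N)) (big_ord_vanishing u0 (leq_maxr M N)).
Qed.

Lemma eq_ez_sum (u v : nat -> nat) : u =1 v -> ez_sum u = ez_sum v.
Proof. by move/functional_extensionality ->. Qed.

Lemma sum_window_rev (g : int -> int) (lo hi : int) (n : nat) :
  lo + n%:Z = hi + 1 -> \sum_(k < n) g (hi - k%:Z) = \sum_(k < n) g (lo + k%:Z).
Proof.
move=> lohi; rewrite (reindex_inj rev_ord_inj); apply: eq_bigr => k _ /=.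
by congr g; have := ltn_ord k; lia.
Qed.

Lemma sum_window_recl (g : int -> int) (c : int) (n : nat) :
  \sum_(k < n.+1) g (c + k%:Z) = g c + \sum_(k < n) g (c + 1 + k%:Z).
Proof.
rewrite big_ord_recl addr0; congr (_ + _).
by apply: eq_bigr => k _; rewrite /bump /= -addrA -PoszD.
Qed.

Lemma sum_window_recl_rev (g : int -> int) (c : int) (n : nat) :
  \sum_(k < n.+1) g (c - k%:Z) = g c + \sum_(k < n) g (c - 1 - k%:Z).
Proof.
rewrite big_ord_recl subr0; congr (_ + _).
by apply: eq_bigr => k _; rewrite /bump /= -addrA -opprD -PoszD.
Qed.

Section PartialSums.

Variables (A : Type) (phi : A -> nat).

Lemma fin_supp_vacuum (a : int -> A) : fin_supp phi a -> exists v, phi v = 0%N.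
Proof. by case=> N aN; exists (a N.+1%:Z); apply: aN; lia. Qed.

Lemma fin_supp_const (v : A) : phi v = 0%N -> fin_supp phi (fun=> v).
Proof. by exists 0%N. Qed.

Lemma fin_supp_if (P : pred int) (x x' : int -> A) :
  fin_supp phi x -> fin_supp phi x' ->
  fin_supp phi (fun y => if P y then x y else x' y).
Proof.
move=> [N xN] [N' xN']; exists (maxn N N') => y yN.
by case: (P y); [apply: xN | apply: xN']; lia.
Qed.

Lemma lsum_rec (a : int -> A) (z : int) : fin_supp phi a ->
  lsum phi a z = (phi (a z) + lsum phi a (z - 1))%N.
Proof.
case=> N aN; set K := (N + `|z|%N).+1.
rewrite /lsum (@ez_sumE _ K.+1) ?(@ez_sumE _ K); try by move=> k lek; apply: aN; lia.
rewrite big_ord_recl /= subr0; congr (_ + _)%N.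
by apply: eq_bigr => k _; congr (phi (a _)); rewrite /bump /=; lia.
Qed.

Lemma rsum_rec (a : int -> A) (z : int) : fin_supp phi a ->
  rsum phi a (z - 1) = (phi (a z) + rsum phi a z)%N.
Proof.
case=> N aN; set K := (N + `|z|%N).+1.
rewrite /rsum (@ez_sumE _ K.+1) ?(@ez_sumE _ K); try by move=> k lek; apply: aN; lia.
rewrite big_ord_recl /= subrK addr0; congr (_ + _)%N.
by apply: eq_bigr => k _; congr (phi (a _)); rewrite /bump /=; lia.
Qed.

Lemma total_split (a : int -> A) (z : int) : fin_supp phi a ->
  Defs.total phi a = (lsum phi a z + rsum phi a z)%N.
Proof.
move=> fa; have step w : (lsum phi a w + rsum phi a w =
    lsum phi a (w - 1) + rsum phi a (w - 1))%N.
  by rewrite lsum_rec // rsum_rec //; lia.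
elim/int_ind: z => [//|n IHn|n IHn]; rewrite IHn.
- by rewrite [RHS]step (_ : n.+1%:Z - 1 = n) //; lia.
- by rewrite step (_ : - n%:Z - 1 = - n.+1%:Z) //; lia.
Qed.

Lemma eq_lsum (x x' : int -> A) (z : int) :
  (forall y, y <= z -> x y = x' y) -> lsum phi x z = lsum phi x' z.
Proof. by move=> xx'; apply: eq_ez_sum => k; rewrite xx' //; lia. Qed.

Lemma eq_rsum (x x' : int -> A) (z : int) :
  (forall y, z < y -> x y = x' y) -> rsum phi x z = rsum phi x' z.
Proof. by move=> xx'; apply: eq_ez_sum => k; rewrite xx' //; lia. Qed.

Lemma lsum_window (x : int -> A) (z : int) (n : nat) :
  (forall y, y <= z - n%:Z -> phi (x y) = 0%N) ->
  (lsum phi x z)%:Z = \sum_(k < n) (phi (x (z - k%:Z)))%:Z.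
Proof.
move=> x0; rewrite /lsum (@ez_sumE _ n) ?(big_morph Posz PoszD (erefl 0%:Z)) //.
by move=> k lenk; apply: x0; lia.
Qed.

Lemma rsum_window (x : int -> A) (z : int) (n : nat) :
  (forall y, z + n%:Z < y -> phi (x y) = 0%N) ->
  (rsum phi x z)%:Z = \sum_(k < n) (phi (x (z + 1 + k%:Z)))%:Z.
Proof.
move=> x0; rewrite /rsum (@ez_sumE _ n) ?(big_morph Posz PoszD (erefl 0%:Z)) //.
by move=> k lenk; apply: x0; lia.
Qed.

End PartialSums.

Definition local_of_radius (A : Type) (B : nat) (F : (int -> A) -> int -> A) :=
  forall (x x' : int -> A) (z : int),
    (forall y, z - B%:Z <= y <= z + B%:Z -> x y = x' y) -> F x z = F x' z.

Lemma CA_local (A : finType) (B : nat) (f : {ffun 'I_(B + B).+1 -> A} -> A) :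
  local_of_radius B (CA f).
Proof.
move=> x x' z xx'; rewrite /CA; congr f; apply/ffunP => i; rewrite !ffunE.
by apply: xx'; have := ltn_ord i; lia.
Qed.

Section Flux.

Variables (A : Type) (phi : A -> nat) (B : nat) (F : (int -> A) -> int -> A).
Hypothesis F_conserved : conserved F phi.
Hypothesis F_local : local_of_radius B F.

Lemma local_eq_ge (x x' : int -> A) (lo : int) :
  (forall y, lo <= y -> x y = x' y) ->
  forall y, lo + B%:Z <= y -> F x y = F x' y.
Proof. by move=> xx' y loy; apply: F_local => w /andP[lew _]; apply: xx'; lia. Qed.

Lemma local_eq_le (x x' : int -> A) (hi : int) :
  (forall y, y <= hi -> x y = x' y) ->
  forall y, y <= hi - B%:Z -> F x y = F x' y.
Proof. by move=> xx' y yhi; apply: F_local => w /andP[_ wle]; apply: xx'; lia. Qed.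

Lemma flux_r_rsum (a : int -> A) (z : int) : fin_supp phi a ->
  flux_r F phi a z = (rsum phi (F a) z)%:Z - (rsum phi a z)%:Z.
Proof.
move=> fa; have [fa' tot] := F_conserved fa.
have := total_split z fa; have := total_split z fa'.
by rewrite /flux_r tot; lia.
Qed.

Lemma flux_r_rec (a : int -> A) (z : int) : fin_supp phi a ->
  flux_r F phi a z = flux_r F phi a (z - 1) + (phi (a z))%:Z - (phi (F a z))%:Z.
Proof.
move=> fa; have [fa' _] := F_conserved fa.
by rewrite /flux_r lsum_rec // (lsum_rec _ fa'); lia.
Qed.

Lemma flux_lrE (a : int -> A) (z : int) : fin_supp phi a ->
  flux_lr F phi a z = (phi (a z))%:Z - (phi (F a z))%:Z.
Proof. by move=> fa; rewrite /flux_lr /flux_l (flux_r_rec z fa); lia. Qed.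

Lemma flux_r_shift (a : int -> A) (z : int) (n : nat) : fin_supp phi a ->
  flux_r F phi a (z + n%:Z) + \sum_(k < n) (phi (F a (z + 1 + k%:Z)))%:Z =
  flux_r F phi a z + \sum_(k < n) (phi (a (z + 1 + k%:Z)))%:Z.
Proof.
move=> fa; elim: n => [|n IHn]; first by rewrite !big_ord0 !addr0.
rewrite !big_ord_recr /= flux_r_rec // (_ : z + n.+1%:Z - 1 = z + n%:Z); last by lia.
rewrite (_ : z + 1 + n%:Z = z + n.+1%:Z); last by lia.
by rewrite [RHS]addrA -IHn addrACA addNr addr0 addrAC.
Qed.

Lemma flux_r_local (a b : int -> A) (z : int) :
  fin_supp phi a -> fin_supp phi b ->
  (forall y, z - B%:Z < y <= z + B%:Z -> b y = a y) ->
  flux_r F phi b z = flux_r F phi a z.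
Proof.
move=> fa fb ba.
pose c y := if y <= z + B%:Z then a y else b y.
have fc : fin_supp phi c by apply: fin_supp_if.
have ca y : y <= z + B%:Z -> c y = a y by rewrite /c => ->.
have cb y : z - B%:Z + 1 <= y -> c y = b y.
  by rewrite /c; case: ifP => // yle ylt; rewrite ba //; lia.
have <- : flux_r F phi c z = flux_r F phi a z.
  rewrite /flux_r (@eq_lsum _ _ c a) => [|y yz]; last by apply: ca; lia.
  by rewrite (@eq_lsum _ _ (F c) (F a)) // => y yz; apply: (local_eq_le ca); lia.
rewrite !flux_r_rsum // (@eq_rsum _ _ c b) => [|y zy]; last by apply: cb; lia.
by rewrite (@eq_rsum _ _ (F c) (F b)) // => y zy; apply: (local_eq_ge cb); lia.
Qed.

Lemma flux_r_le_left (a : int -> A) (z : int) : fin_supp phi a ->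
  flux_r F phi a z <= \sum_(k < B) (phi (a (z - k%:Z)))%:Z.
Proof.
move=> fa; have [v v0] := fin_supp_vacuum fa.
pose c y := if y <= z - B%:Z then v else a y.
have fc : fin_supp phi c by apply: fin_supp_if => //; apply: fin_supp_const.
rewrite -(flux_r_local fa fc) => [|y /andP[lty _]]; last by rewrite /c ifF //; lia.
have -> : \sum_(k < B) (phi (a (z - k%:Z)))%:Z = (lsum phi c z)%:Z.
  rewrite (lsum_window (n := B)) => [|y yle]; last by rewrite /c yle.
  by apply: eq_bigr => k _; rewrite /c ifF //; have := ltn_ord k; lia.
by rewrite /flux_r lerBlDr lerDl.
Qed.

Lemma oppr_flux_r_le_right (a : int -> A) (z : int) : fin_supp phi a ->
  - flux_r F phi a z <= \sum_(k < B) (phi (a (z + 1 + k%:Z)))%:Z.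
Proof.
move=> fa; have [v v0] := fin_supp_vacuum fa.
pose c y := if y <= z + B%:Z then a y else v.
have fc : fin_supp phi c by apply: fin_supp_if => //; apply: fin_supp_const.
rewrite -(flux_r_local fa fc) => [|y /andP[_ yle]]; last by rewrite /c yle.
have -> : \sum_(k < B) (phi (a (z + 1 + k%:Z)))%:Z = (rsum phi c z)%:Z.
  rewrite (rsum_window (n := B)) => [|y lty]; last by rewrite /c ifF //; lia.
  by apply: eq_bigr => k _; rewrite /c ifT //; have := ltn_ord k; lia.
by rewrite flux_r_rsum // opprB lerBlDr lerDl.
Qed.

Lemma flux_r_le_image_right (a : int -> A) (z : int) : fin_supp phi a ->
  flux_r F phi a z <= \sum_(k < B.+1) (phi (F a (z + k%:Z)))%:Z.
Proof.
move=> fa; rewrite (sum_window_recl (fun y => (phi (F a y))%:Z)).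
have := flux_r_le_left (z + B%:Z) fa.
rewrite (@sum_window_rev (fun y => (phi (a y))%:Z) (z + 1)); last by lia.
have := flux_r_shift z B fa; lia.
Qed.

Lemma flux_l_le_image_left (a : int -> A) (z : int) : fin_supp phi a ->
  flux_l F phi a z <= \sum_(k < B.+1) (phi (F a (z - k%:Z)))%:Z.
Proof.
move=> fa; rewrite /flux_l (sum_window_recl_rev (fun y => (phi (F a y))%:Z)).
rewrite (@sum_window_rev (fun y => (phi (F a y))%:Z) (z - 1 - B%:Z + 1)); last by lia.
have := oppr_flux_r_le_right (z - 1 - B%:Z) fa.
have := flux_r_shift (z - 1 - B%:Z) B fa.
by rewrite (_ : z - 1 - B%:Z + B%:Z = z - 1); lia.
Qed.

End Flux.

Theorem proposition12 (A : finType) (B : nat)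
  (f : {ffun 'I_(B + B).+1 -> A} -> A) (phi : A -> nat)
  (Hcons : conserved (CA f) phi)
  (a : int -> A) (Ha : fin_supp phi a) :
  let a' := CA f a in
  (* (1) *)
  (forall z : int,
     flux_lr (CA f) phi a z = - ((phi (a' z))%:Z - (phi (a z))%:Z)) /\
  (* (2) *)
  (forall z : int, forall b : int -> A, fin_supp phi b ->
     (forall y : int, z - B%:Z <= y <= z + B%:Z -> b y = a y) ->
     flux_r (CA f) phi b z = flux_r (CA f) phi a z) /\
  (* (3) *)
  (forall z : int,
     flux_r (CA f) phi a z <= \sum_(k < B.+1) (phi (a (z - k%:Z)))%:Z /\
     flux_r (CA f) phi a z <= \sum_(k < B.+1) (phi (a' (z + k%:Z)))%:Z /\
     flux_l (CA f) phi a z <= \sum_(k < B.+1) (phi (a (z + k%:Z)))%:Z /\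
     flux_l (CA f) phi a z <= \sum_(k < B.+1) (phi (a' (z - k%:Z)))%:Z).
Proof.
move=> a'; rewrite {}/a'; have loc := CA_local f.
split; [|split].
- by move=> z; rewrite (flux_lrE Hcons z Ha) opprB.
- move=> z b fb ba.
  by apply: (flux_r_local Hcons loc Ha fb) => y /andP[lty yle]; apply: ba; lia.
move=> z; split; [|split; [|split]].
- apply: le_trans (flux_r_le_left Hcons loc z Ha) _.
  by rewrite big_ord_recr lerDl.
- exact (flux_r_le_image_right Hcons loc z Ha).
- apply: le_trans (oppr_flux_r_le_right Hcons loc (z - 1) Ha) _.
  under eq_bigr do rewrite subrK.
  by rewrite big_ord_recr /= lerDl.
- exact (flux_l_le_image_left Hcons loc z Ha).
Qed.
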